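(* Let $r\ge2$ and let $\lambda$ be a partition of length $r$ with degree sequence $(n_1,n_2,\dots,n_r)$ (increasing). Let $\mu_1$ be the partition with degree sequence $(n_1,\dots,n_{r-1})$ and $\mu_2$ the partition with degree sequence $(n_1,\dots,n_{r-2},n_r)$. If $R_{\mu_1}(x)$ is irreducible (non-constant and irreducible over $\mathbb{Q}$) and $R_{\mu_1}(x)$ divides $R_\lambda(x)$, then $R_{\mu_1}(x)$ divides $R_{\mu_2}(x)$.
   Context: $\mathrm{He}_k(x)$ denotes the monic probabilists' Hermite polynomial of degree $k$. A partition $\lambda=(\lambda_1\ge\dots\ge\lambda_r\ge0)$ may have zero parts; its degree sequence is $n_\lambda=(\lambda_r,\lambda_{r-1}+1,\dots,\lambda_1+r-1)$, and any set of $r$ distinct non-negative integers is the degree sequence of exactly one partition of length $r$. $\mathrm{He}_\lambda=\mathrm{Wr}[\mathrm{He}_{n_1},\dots,\mathrm{He}_{n_r}]/\prod_{i<j}(n_j-n_i)$. Removing a $2$-hook means replacing an entry $a$ of $n_\lambda$ by $a-2\ge0$ with $a-2\notin n_\lambda$; removing $2$-hooks until impossible yields the $2$-core $\bar\lambda$, and $\mathrm{He}_\lambda(x)=x^{|\bar\lambda|}R_\lambda(x)$ with $R_\lambda\in\mathbb{Z}[x]$, $R_\lambda(0)\ne0$. *)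

From HB Require Import structures.
From mathcomp Require Import all_boot all_order all_algebra.
Set Implicit Arguments. Unset Strict Implicit. Unset Printing Implicit Defensive.
Import GRing.Theory.
Local Open Scope ring_scope.

(* Probabilists' Hermite polynomials over Q:
   He_0 = 1, He_1 = x, He_{k+2} = x He_{k+1} - (k+1) He_k. *)
Fixpoint hermite_pair (k : nat) : {poly rat} * {poly rat} :=
  match k with
  | 0%N => (1, 'X)
  | k'.+1 => let: (a, b) := hermite_pair k' in (b, 'X * b - (k'.+1)%:R *: a)
  end.

Definition He (k : nat) : {poly rat} := (hermite_pair k).1.

Definition wronskian (fs : seq {poly rat}) : {poly rat} :=
  \det (\matrix_(i < size fs, j < size fs) (nth 0 fs j)^`(i)).

(* He_lambda for the partition lambda given by its degree sequence ns
   (an increasing sequence n_1 < ... < n_r of non-negative integers). *)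
Definition He_part (ns : seq nat) : {poly rat} :=
  (\prod_(i < size ns) \prod_(j < size ns | (i < j)%N)
      ((nth 0%N ns j)%:R - (nth 0%N ns i)%:R))^-1
  *: wronskian (map He ns).

Definition R_part (ns : seq nat) : {poly rat} :=
  He_part ns %/ 'X ^+ (mup 0 (He_part ns)).

(* Nothing specific to Hermite polynomials is used.  Write F for the
   polynomials He_{n_1}, ..., He_{n_{r-2}}, a = He_{n_{r-1}}, b = He_{n_r} and
   W(.) for Wronskians.  The proof has two independent ingredients:
   1. the Wronskian identity  W(F,a,b) W(F) = W(F,a) W(F,b)' - W(F,b) W(F,a)',
      which is the Desnanot-Jacobi identity for the (reversed) Wronskian
      matrix of (F,a,b), combined with the fact that the derivative of a
      Wronskian is obtained by differentiating its last row;
   2. a divisibility argument: if P is the irreducible zero-free part of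
      c W(F,a) and P | W(F,a,b), the identity gives P | W(F,b) W(F,a)', and
      P does not divide W(F,a)' (in characteristic 0 an irreducible factor
      prime to X is a simple factor), so P | W(F,b).
   Since R_lambda is the zero-free part of a nonzero multiple of
   W(He_{n_1}, ..., He_{n_r}), the theorem follows by combining 1 and 2. *)

From HB Require Import structures.
From mathcomp Require Import all_boot all_order all_algebra perm zify.
Set Implicit Arguments. Unset Strict Implicit. Unset Printing Implicit Defensive.
Import GRing.Theory Num.Theory.
Local Open Scope ring_scope.

Section DesnanotJacobi.
Variable R : comNzRingType.

Lemma det_rev_ord m (A B : 'M[R]_m) :
  (forall i j, A i j = B (rev_ord i) (rev_ord j)) -> \det A = \det B.
Proof.
move=> AB; pose s := perm (@rev_ord_inj m).
have -> : A = row_perm s (col_perm s B).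
  by apply/matrixP=> i j; rewrite !mxE !permE AB.
rewrite row_permE col_permE !det_mulmx !det_perm odd_permV.
by rewrite mulrCA -signr_addb addbb expr0 mulr1.
Qed.

Lemma det_mx22 (A : 'M[R]_2) : \det A = A 0 0 * A 1 1 - A 0 1 * A 1 0.
Proof.
rewrite (expand_det_row _ 0) !big_ord_recl big_ord0 addr0 /cofactor /=.
rewrite !det_mx11 !mxE /=.
have -> : lift ord0 (0 : 'I_1) = 1 :> 'I_2 by apply/val_inj.
have -> : lift 1 (0 : 'I_1) = 0 :> 'I_2 by apply/val_inj.
by rewrite expr0 expr1 mul1r mulN1r mulrN.
Qed.

(* The Desnanot-Jacobi identity multiplied by det M: the product of M with the
   block matrix built from the first two columns of adj M is block triangular. *)
Lemma desnanot_jacobi_mul n (M : 'M[R]_(2 + n)) :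
  \det M * (cofactor M 0 0 * cofactor M 1 1 - cofactor M 1 0 * cofactor M 0 1)
  = \det M * (\det M * \det (drsubmx M)).
Proof.
pose B := block_mx (ulsubmx (\adj M)) 0 (dlsubmx (\adj M)) 1%:M.
have detB : \det B =
    cofactor M 0 0 * cofactor M 1 1 - cofactor M 1 0 * cofactor M 0 1.
  rewrite det_lblock det1 mulr1 det_mx22 !mxE.
  have -> : lshift n (0 : 'I_2) = 0 by apply/val_inj.
  by have -> : lshift n (1 : 'I_2) = 1 by apply/val_inj.
have MB : M *m B = block_mx (\det M)%:M (ursubmx M) 0 (drsubmx M).
  have := mul_mx_adj M; rewrite -[M in M *m _]submxK -[\adj M]submxK.
  rewrite mulmx_block scalar_mx_block => /eq_block_mx [e1 _ e3 _].
  rewrite -[M in M *m _]submxK /B mulmx_block !mulmx0 !mulmx1 ?add0r ?addr0.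
  by rewrite e1 e3.
have := det_mulmx M B; rewrite MB det_ublock det_scalar detB => <-.
by rewrite expr2 mulrA.
Qed.
End DesnanotJacobi.

(* Over an integral domain det M may be cancelled
   once we specialise the generic matrix x - (- M), whose determinant is monic. *)
Lemma desnanot_jacobi (R : idomainType) n (M : 'M[R]_(2 + n)) :
  \det M * \det (drsubmx M) =
  cofactor M 0 0 * cofactor M 1 1 - cofactor M 1 0 * cofactor M 0 1.
Proof.
have nonsingular (S : idomainType) (N : 'M[S]_(2 + n)) : \det N != 0 ->
    \det N * \det (drsubmx N) =
    cofactor N 0 0 * cofactor N 1 1 - cofactor N 1 0 * cofactor N 0 1.
  by move=> /mulfI; apply; rewrite desnanot_jacobi_mul.
pose N := char_poly_mx (- M).
have NM : map_mx (horner_eval 0) N = M.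
  apply/matrixP=> i j; rewrite !mxE /horner_eval !hornerE.
  by case: (i == j); rewrite /= ?hornerE ?opprK.
rewrite -NM -map_drsubmx !det_map_mx !cofactor_map_mx -!rmorphM -rmorphB.
by rewrite nonsingular // monic_neq0 // char_poly_monic.
Qed.

Section DerivDet.
Variable R : comNzRingType.

Lemma deriv_prod m (F : 'I_m -> {poly R}) :
  (\prod_(i < m) F i)^`() =
  \sum_(k < m) \prod_(i < m) (if i == k then (F i)^`() else F i).
Proof.
elim: m F => [|m IH] F; first by rewrite !big_ord0 -polyC1 derivC.
rewrite big_ord_recr /= derivM IH big_distrl /= big_ord_recr /=.
congr (_ + _).
  apply: eq_bigr => k _; rewrite big_ord_recr /=.
  have -> : (ord_max == widen_ord (leqnSn m) k) = false.
    by apply/negbTE; rewrite neq_ltn /= ltn_ord orbT.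
  by congr (_ * _); apply: eq_bigr.
rewrite big_ord_recr /= eqxx; congr (_ * _); apply: eq_bigr => i _.
have -> // : (widen_ord (leqnSn m) i == ord_max) = false.
by apply/negbTE; rewrite neq_ltn /= ltn_ord.
Qed.

Lemma deriv_det m (A : 'M[{poly R}]_m) :
  (\det A)^`() =
  \sum_(k < m) \det (\matrix_(i, j) if i == k then (A i j)^`() else A i j).
Proof.
rewrite /determinant (@raddf_sum _ _ (@deriv R)) exchange_big /=.
apply: eq_bigr => s _; rewrite -[RHS]big_distrr /=.
have -> : ((-1) ^+ s : {poly R}) = ((-1) ^+ s)%:P by rewrite rmorph_sign.
rewrite deriv_mulC deriv_prod.
by congr (_ * _); apply: eq_bigr => k _; apply: eq_bigr => i _; rewrite mxE.
Qed.

Definition wronskian_mx (fs : seq {poly R}) m (rho : nat -> nat)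
  : 'M[{poly R}]_m := \matrix_(i < m, j < m) (nth 0 fs j)^`(rho i).

(* Row order of a Wronskian whose last row m is differentiated once more. *)
Definition skip_last m (i : nat) : nat := if i == m then m.+1 else i.

(* Differentiating a Wronskian only differentiates its last row: every other
   term of deriv_det has two equal rows. *)
Lemma deriv_wronskian fs m :
  (\det (wronskian_mx fs m.+1 id))^`() = \det (wronskian_mx fs m.+1 (skip_last m)).
Proof.
rewrite deriv_det big_ord_recr /= big1 ?add0r.
  congr (\det _); apply/matrixP=> i j; rewrite !mxE /skip_last.
  case: (altP (i =P ord_max)) => [->|ne]; first by rewrite eqxx derivnS.
  by rewrite ifN //; apply: contra ne => /eqP e; apply/eqP/val_inj.
move=> k _; apply: (@determinant_alternate _ _ _ (widen_ord (leqnSn m) k) (lift ord0 k)).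
  by rewrite neq_ltn /= ltnSn.
move=> j; rewrite !mxE eqxx /= ifN ?add0n //.
by rewrite neq_ltn /= ltnSn orbT.
Qed.
End DerivDet.

Section WronskianIdentity.
Variable R : idomainType.
Variables (F : seq {poly R}) (a b : {poly R}).
Let n := size F.

(* The Wronskian matrix of (F, a, b) with rows and columns reversed, so that
   a and b sit in the first two columns and the top derivatives in the first
   two rows: its minors are the Wronskians of (F, a), (F, b) and F. *)
Let M : 'M[{poly R}]_(2 + n) :=
  \matrix_(i, j) (nth 0 (F ++ [:: a; b]) (n.+1 - j))^`(n.+1 - i).

Let nth_Fa k : (k <= n)%N -> nth 0 (F ++ [:: a; b]) k = nth 0 (F ++ [:: a]) k.
Proof.
move=> kn; rewrite !nth_cat; case: ltnP => // _.
by have -> : (k - n = 0)%N by lia.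
Qed.

Let nth_Fb k : (k <= n)%N ->
  nth 0 (F ++ [:: a; b]) (if k == n then n.+1 else k) = nth 0 (F ++ [:: b]) k.
Proof.
move=> kn; rewrite !nth_cat /n; case: eqP => [->|ne].
  by rewrite ltnn ltnNge leqnSn /= subSn // subnn.
have kF : (k < size F)%N by move: kn ne; rewrite /n; lia.
by rewrite kF.
Qed.

Let det_M : \det M = \det (wronskian_mx (F ++ [:: a; b]) n.+2 id).
Proof. by apply: det_rev_ord => i j; rewrite !mxE. Qed.

Let det_minor : \det (drsubmx M) = \det (wronskian_mx F n id).
Proof.
apply: det_rev_ord => i j; rewrite !mxE /= nth_cat ifT; last by have := ltn_ord j; lia.
by congr (nth _ _ _)^`(_); have := ltn_ord i; have := ltn_ord j; lia.
Qed.

Let cofactor00 : cofactor M 0 0 = \det (wronskian_mx (F ++ [:: a]) n.+1 id).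
Proof.
rewrite /cofactor /= expr0 mul1r; apply: det_rev_ord => i j; rewrite !mxE /=.
rewrite /bump /= !add1n nth_Fa; last by have := ltn_ord j; lia.
by congr (nth _ _ _)^`(_); lia.
Qed.

Let cofactor11 :
  cofactor M 1 1 = \det (wronskian_mx (F ++ [:: b]) n.+1 (skip_last n)).
Proof.
rewrite /cofactor /= modn_small // expr2 mulrNN !mul1r.
apply: det_rev_ord => i j; rewrite !mxE /= modn_small //.
rewrite -nth_Fb; last by have := ltn_ord j; lia.
congr (nth _ _ _)^`(_); rewrite /skip_last /bump /=;
  by case: i j => -[|i] ? [[|j] ?] /=; repeat case: eqP; lia.
Qed.

Let cofactor01 : cofactor M 0 1 = - \det (wronskian_mx (F ++ [:: b]) n.+1 id).
Proof.
rewrite /cofactor /= modn_small // expr1 mulN1r; congr (- _).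
apply: det_rev_ord => i j; rewrite !mxE /= modn_small //.
rewrite -nth_Fb; last by have := ltn_ord j; lia.
congr (nth _ _ _)^`(_); rewrite /bump /=;
  by case: i j => -[|i] ? [[|j] ?] /=; repeat case: eqP; lia.
Qed.

Let cofactor10 :
  cofactor M 1 0 = - \det (wronskian_mx (F ++ [:: a]) n.+1 (skip_last n)).
Proof.
rewrite /cofactor /= modn_small // expr1 mulN1r; congr (- _).
apply: det_rev_ord => i j; rewrite !mxE /= modn_small //.
rewrite /skip_last /bump /= nth_Fa; last by case: j => -[|j] /= ?; lia.
congr (nth _ _ _)^`(_);
  by case: i j => -[|i] ? [[|j] ?] /=; repeat case: eqP; lia.
Qed.

Lemma wronskian_identity :
  \det (wronskian_mx (F ++ [:: a; b]) n.+2 id) * \det (wronskian_mx F n id) =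
  \det (wronskian_mx (F ++ [:: a]) n.+1 id) *
    (\det (wronskian_mx (F ++ [:: b]) n.+1 id))^`() -
  \det (wronskian_mx (F ++ [:: b]) n.+1 id) *
    (\det (wronskian_mx (F ++ [:: a]) n.+1 id))^`().
Proof.
rewrite -det_M -det_minor desnanot_jacobi cofactor00 cofactor11 cofactor01.
by rewrite cofactor10 !deriv_wronskian mulrNN [X in _ - X]mulrC.
Qed.
End WronskianIdentity.

Section ZeroFreePart.
Variable K : fieldType.
Implicit Types p q P : {poly K}.

Definition zero_free p : {poly K} := p %/ 'X ^+ (mup 0 p).

Lemma zero_freeE p : p = zero_free p * 'X ^+ (mup 0 p).
Proof.
have [->|p0] := eqVneq p 0; first by rewrite /zero_free div0p mul0r.
rewrite /zero_free divpK //.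
by have := leqnn (mup 0 p); rewrite mup_geq // polyC0 subr0.
Qed.

Lemma zero_free0 : zero_free 0 = 0.
Proof. by rewrite /zero_free div0p. Qed.

Lemma zero_free_dvdp p : zero_free p %| p.
Proof. by rewrite [X in _ %| X]zero_freeE dvdp_mulr. Qed.

Lemma coprimep_zero_free_X p : p != 0 -> coprimep (zero_free p) 'X.
Proof.
move=> p0; rewrite coprimepX -dvdp_XsubCl polyC0 subr0.
apply/negP => Xp; have := leqnn (mup 0 p).
rewrite mup_leq // polyC0 subr0 => /negP; apply.
by rewrite {2}(zero_freeE p) exprSr mulrC dvdp_mul.
Qed.

Lemma dvdp_zero_free P p :
  coprimep P 'X -> P %| p -> P %| zero_free p.
Proof. by move=> PX; rewrite {1}(zero_freeE p) Gauss_dvdpl ?coprimep_expr. Qed.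

Lemma irredp_coprimep P q : irreducible_poly P -> ~~ (P %| q) -> coprimep P q.
Proof.
move=> Pirr nPq; rewrite coprimep_def; apply/negPn/negP => gcd_nc.
have /eqp_dvdl e := Pirr.2 _ gcd_nc (dvdp_gcdl P q).
by move: (dvdp_gcdr P q); rewrite e (negbTE nPq).
Qed.

Hypothesis K_char0 : [pchar K] =i pred0.

Lemma deriv_neq0 P : (1 < size P)%N -> P^`() != 0.
Proof.
move=> P_gt1; have P0 : P != 0 by rewrite -size_poly_gt0; lia.
apply/eqP => /(congr1 (fun q => q`_(size P).-2)).
rewrite coef_deriv coef0 => /eqP; rewrite -mulr_natr mulf_eq0; apply/negP.
rewrite negb_or (proj1 (pcharf0P _) K_char0) andbT.
have -> : (size P).-2.+1 = (size P).-1 by lia.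
by rewrite -/(lead_coef P) lead_coef_eq0.
Qed.

(* An irreducible zero-free part P of p is a simple factor: P does not divide
   p', since p' = P' X^k + P (X^k)' and P is prime to both X^k and P'. *)
Lemma irreducible_zero_free_ndvd_deriv p :
  irreducible_poly (zero_free p) -> ~~ (zero_free p %| p^`()).
Proof.
set P := zero_free p => Pirr.
have p0 : p != 0.
  by apply: contra_neq (irredp_neq0 Pirr) => p0; rewrite /P p0 zero_free0.
rewrite [X in _ %| X^`()]zero_freeE derivM -/P dvdp_addl ?dvdp_mulIl //.
rewrite Gauss_dvdpl ?coprimep_expr ?coprimep_zero_free_X //; apply/negP.
move/(dvdp_leq (deriv_neq0 Pirr.1)).
by rewrite leqNgt lt_size_deriv ?irredp_neq0.
Qed.

Lemma irredp_dvdp_wronskian_pair P W1 W2 Wl Wn :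
  Wl * Wn = W1 * W2^`() - W2 * W1^`() -> irreducible_poly P ->
  P %| W1 -> ~~ (P %| W1^`()) -> P %| Wl -> P %| W2.
Proof.
move=> id_W Pirr PW1 nPW1' PWl.
have PW2W1' : P %| W2 * W1^`().
  have -> : W2 * W1^`() = W1 * W2^`() - Wl * Wn by rewrite id_W opprB addrC subrK.
  by rewrite dvdp_sub ?dvdp_mulr.
by rewrite Gauss_dvdpl ?irredp_coprimep in PW2W1'.
Qed.

(* The same statement for zero-free parts of nonzero multiples, which is the
   form in which R_lambda = zero-free part of c_lambda W(He_{n_1},...) appears. *)
Lemma zero_free_wronskian_pair (W1 W2 Wl Wn : {poly K}) (c1 c2 cl : K) :
  Wl * Wn = W1 * W2^`() - W2 * W1^`() -> cl != 0 ->
  irreducible_poly (zero_free (c1 *: W1)) ->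
  zero_free (c1 *: W1) %| zero_free (cl *: Wl) ->
  zero_free (c1 *: W1) %| zero_free (c2 *: W2).
Proof.
set P := zero_free (c1 *: W1) => id_W cl0 Pirr PWl.
have c1W1_0 : c1 *: W1 != 0.
  by apply: contra_neq (irredp_neq0 Pirr) => W0; rewrite /P W0 zero_free0.
have c1_0 : c1 != 0 by apply: contra_neq c1W1_0 => ->; rewrite scale0r.
have [->|c2_0] := eqVneq c2 0; first by rewrite scale0r zero_free0 dvdp0.
apply: dvdp_zero_free; first exact: coprimep_zero_free_X.
rewrite dvdpZr //; apply: (irredp_dvdp_wronskian_pair id_W Pirr).
- by rewrite -(dvdpZr _ _ c1_0) zero_free_dvdp.
- by rewrite -(dvdpZr _ _ c1_0) -derivZ irreducible_zero_free_ndvd_deriv.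
- by rewrite -(dvdpZr _ _ cl0) (dvdp_trans PWl) ?zero_free_dvdp.
Qed.
End ZeroFreePart.

Lemma wronskian_snoc2 (G : seq {poly rat}) (a b : {poly rat}) :
  wronskian (G ++ [:: a; b]) * wronskian G =
  wronskian (G ++ [:: a]) * (wronskian (G ++ [:: b]))^`() -
  wronskian (G ++ [:: b]) * (wronskian (G ++ [:: a]))^`().
Proof.
rewrite /wronskian -!/(wronskian_mx _ _ id) !size_cat /= addn2 addn1.
exact: wronskian_identity.
Qed.

Lemma degree_gaps_neq0 (ns : seq nat) : sorted ltn ns ->
  \prod_(i < size ns) \prod_(j < size ns | (i < j)%N)
      ((nth 0%N ns j)%:R - (nth 0%N ns i)%:R : rat) != 0.
Proof.
move=> ns_sorted; rewrite prodf_seq_neq0; apply/allP => i _ /=.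
rewrite prodf_seq_neq0; apply/allP => j _; apply/implyP => ij.
rewrite subr_eq0 eqr_nat gtn_eqF //.
by apply: (sorted_ltn_nth ltn_trans) => //; rewrite inE ltn_ord.
Qed.

Lemma split_last2 (T : Type) (s : seq T) :
  (2 <= size s)%N -> exists s' x y, s = s' ++ [:: x; y].
Proof.
move=> s_ge2; exists (take (size s).-2 s).
have := size_drop (size s).-2 s.
case e: (drop _ s) => [|x [|y [|z t]]] /= h; try lia.
by exists x, y; rewrite -e cat_take_drop.
Qed.

Theorem mainTheorem19 (r : nat) (ns : seq nat) :
  (2 <= r)%N -> size ns = r -> sorted ltn ns ->
  let mu1 := take r.-1 ns in
  let mu2 := take r.-2 ns ++ [:: last 0%N ns] in
  irreducible_poly (R_part mu1) ->
  R_part mu1 %| R_part ns ->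
  R_part mu1 %| R_part mu2.
Proof.
move=> r_ge2 size_ns ns_sorted mu1 mu2.
have [s [x [y ns_eq]]] : exists s x y, ns = s ++ [:: x; y].
  by apply: split_last2; rewrite size_ns.
subst ns; move: size_ns; rewrite size_cat addn2 => size_ns; subst r.
have -> : mu1 = s ++ [:: x] by rewrite /mu1 take_cat ltnNge leqnSn /= subSnn.
have -> : mu2 = s ++ [:: y] by rewrite /mu2 /= take_size_cat // last_cat.
rewrite /R_part /He_part -!/(zero_free _) !map_cat /=.
apply: zero_free_wronskian_pair.
- exact: pchar_num.
- exact: wronskian_snoc2.
- by rewrite invr_neq0 // degree_gaps_neq0.
Qed.
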